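(* Let $d\ge 1$ and let $f:\mathbb{R}^d\setminus\{0\}\to\mathbb{R}$ be differentiable and scale-invariant, i.e. $f(c\mathbf{w})=f(\mathbf{w})$ for all $\mathbf{w}\neq 0$ and all $c>0$. Fix a learning rate $\eta>0$, a momentum coefficient $\beta\in[0,1)$, and an initial point $\mathbf{w}_0\neq 0$. Define the momentum gradient descent iterates by $\mathbf{p}_{-1}=0$ and, for $t\ge 0$, $$\mathbf{p}_t=\beta\,\mathbf{p}_{t-1}+\nabla f(\mathbf{w}_t),\qquad \mathbf{w}_{t+1}=\mathbf{w}_t-\eta\,\mathbf{p}_t$$ (assuming all iterates $\mathbf{w}_t$ are nonzero so that the gradients are defined). Then for every $t\ge 0$, $$\|\mathbf{w}_{t+1}\|_2^2=\|\mathbf{w}_t\|_2^2+\eta^2\|\mathbf{p}_t\|_2^2+2\eta^2\sum_{k=0}^{t-1}\beta^{t-k}\|\mathbf{p}_k\|_2^2 .$$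
   Context: Scale invariance of $f$ means $f(c\mathbf{w})=f(\mathbf{w})$ for every $c>0$; for such differentiable $f$ one has $\mathbf{w}\cdot\nabla f(\mathbf{w})=0$. The update rule above is the (heavy-ball) momentum gradient descent with no weight decay; the empty sum (for $t=0$) is zero. *)

From HB Require Import structures.
From mathcomp Require Import all_boot all_order all_algebra.
From mathcomp Require Import all_classical all_reals all_analysis.
Set Implicit Arguments. Unset Strict Implicit. Unset Printing Implicit Defensive.
Import Order.TTheory GRing.Theory Num.Theory.
Import numFieldNormedType.Exports.
Local Open Scope ring_scope.

Definition basis_vec (R : realType) (d : nat) (i : 'I_d) : 'rV[R]_d :=
  delta_mx 0 i.

Definition grad (R : realType) (d : nat) (f : 'rV[R]_d -> R) (w : 'rV[R]_d)
  : 'rV[R]_d :=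
  \row_i ('D_(basis_vec R i) f w).

Definition sqnorm2 (R : realType) (d : nat) (v : 'rV[R]_d) : R :=
  \sum_(i < d) (v 0 i) ^+ 2.

(** Scale invariance makes every gradient orthogonal to its base point
    (Euler's identity for degree-0 homogeneous functions).  Hence
    <w_t, p_t> = beta <w_t, p_(t-1)> = beta (<w_(t-1), p_(t-1)> - eta |p_(t-1)|^2),
    which unrolls to <w_t, p_t> = - eta \sum_(k<t) beta^(t-k) |p_k|^2, and
    expanding |w_t - eta p_t|^2 gives the claimed identity. *)
From HB Require Import structures.
From mathcomp Require Import all_boot all_order all_algebra.
From mathcomp Require Import all_classical all_reals all_analysis.
From mathcomp Require Import ring.
Set Implicit Arguments. Unset Strict Implicit.
Import Order.TTheory GRing.Theory Num.Theory.
Import numFieldNormedType.Exports.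
Local Open Scope ring_scope.

Section EuclideanRowVectors.
Variables (R : realType) (d : nat).
Implicit Types (u v x : 'rV[R]_d) (f : 'rV[R]_d -> R).

Definition dot u v : R := \sum_(i < d) u 0 i * v 0 i.

Lemma dotC u v : dot u v = dot v u.
Proof. by apply: eq_bigr => i _; rewrite mulrC. Qed.

Lemma dotZDl (a : R) u v x : dot (a *: u + v) x = a * dot u x + dot v x.
Proof.
rewrite /dot mulr_sumr -big_split; apply: eq_bigr => i _.
by rewrite !mxE mulrDl mulrA.
Qed.

Lemma sqnorm2_dot u : sqnorm2 u = dot u u.
Proof. by apply: eq_bigr => i _; rewrite expr2. Qed.

Lemma sqnorm2_subZ (e : R) u v :
  sqnorm2 (u - e *: v) = sqnorm2 u + e ^+ 2 * sqnorm2 v - 2 * e * dot u v.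
Proof.
rewrite /sqnorm2 /dot !mulr_sumr -sumrN -!big_split; apply: eq_bigr => i _.
by rewrite !mxE /=; ring.
Qed.

Lemma dot_grad f x v : differentiable f x -> dot v (grad f x) = 'D_v f x.
Proof.
move=> df; rewrite deriveE // [in RHS](row_sum_delta v) linear_sum.
by apply: eq_bigr => i _; rewrite linearZ /= mxE /basis_vec deriveE.
Qed.

Lemma derive_self_scale_invariant f x :
  (forall c, 0 < c -> f (c *: x) = f x) -> 'D_x f x = 0.
Proof.
move=> f_scale; apply/lim_near_cst => //=; near=> h.
have : `|h| < 1 by near: h; apply: dnbhs0_lt.
rewrite ltr_norml => /andP[h_gtN1 _].
rewrite /shift /= -{2}(scale1r x) -scalerDl f_scale ?subrr ?scaler0 //.
by rewrite -ltrBlDr sub0r.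
Unshelve. all: by end_near.
Qed.

Lemma dot_grad_scale_invariant f x :
  differentiable f x -> (forall c, 0 < c -> f (c *: x) = f x) ->
  dot x (grad f x) = 0.
Proof. by move=> df /derive_self_scale_invariant <-; apply: dot_grad. Qed.

End EuclideanRowVectors.

Section MomentumRecurrence.
Variables (R : realType) (d : nat) (eta beta : R).
Variables (w p g : nat -> 'rV[R]_d).
Hypothesis p0 : p 0%N = g 0%N.
Hypothesis pS : forall t, p t.+1 = beta *: p t + g t.+1.
Hypothesis wS : forall t, w t.+1 = w t - eta *: p t.
Hypothesis g_orth : forall t, dot (w t) (g t) = 0.

Lemma dot_iterate_momentum t :
  dot (w t) (p t) = - eta * \sum_(k < t) beta ^+ (t - k) * sqnorm2 (p k).
Proof.
elim: t => [|t IH]; first by rewrite p0 g_orth big_ord0 mulr0.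
rewrite pS dotC dotZDl [dot (g _) _]dotC g_orth addr0.
rewrite wS [dot (p t) _]dotC addrC -scaleNr dotZDl IH -sqnorm2_dot.
have sum_shift : \sum_(k < t.+1) beta ^+ (t.+1 - k) * sqnorm2 (p k) =
    beta * (\sum_(k < t) beta ^+ (t - k) * sqnorm2 (p k) + sqnorm2 (p t)).
  rewrite big_ord_recr subSnn expr1 mulrDr; congr (_ + _).
  rewrite mulr_sumr; apply: eq_bigr => k _.
  by rewrite subSn ?(ltnW (ltn_ord k)) // exprS mulrA.
by rewrite sum_shift; ring.
Qed.

Lemma sqnorm2_momentum_step t :
  sqnorm2 (w t.+1) =
    sqnorm2 (w t) + eta ^+ 2 * sqnorm2 (p t)
    + 2 * eta ^+ 2 * \sum_(k < t) beta ^+ (t - k) * sqnorm2 (p k).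
Proof. by rewrite wS sqnorm2_subZ dot_iterate_momentum; ring. Qed.

End MomentumRecurrence.

Theorem mainTheorem1 (R : realType) (d : nat) (hd : (1 <= d)%N)
  (f : 'rV[R]_d -> R)
  (f_diff : forall w : 'rV[R]_d, w != 0 -> differentiable f w)
  (f_scale : forall (w : 'rV[R]_d) (c : R), w != 0 -> 0 < c -> f (c *: w) = f w)
  (eta beta : R) (heta : 0 < eta) (hbeta0 : 0 <= beta) (hbeta1 : beta < 1)
  (w p : nat -> 'rV[R]_d)
  (hw_nz : forall t, w t != 0)
  (hp0 : p 0%N = grad f (w 0%N))
  (hpS : forall t, p t.+1 = beta *: p t + grad f (w t.+1))
  (hwS : forall t, w t.+1 = w t - eta *: p t) :
  forall t : nat,
    sqnorm2 (w t.+1) =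
      sqnorm2 (w t) + eta ^+ 2 * sqnorm2 (p t)
      + 2 * eta ^+ 2 * \sum_(k < t) beta ^+ (t - k) * sqnorm2 (p k).
Proof.
apply: (sqnorm2_momentum_step hp0 hpS hwS) => t.
apply: dot_grad_scale_invariant; first exact: f_diff.
by move=> c; apply: f_scale.
Qed.
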